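(* Let $b$ be a prime and let $p$ be a prime of the form $p=bt+1$ with $t$ a positive integer and $b\nmid t$. Then $$g\Big(\tfrac{p^b-1}{b^2},\,p^b\Big)=b\,g(t,p).$$ In particular, if $b$ is an odd prime and $p=2b+1$ is prime, then $g\big(\tfrac{p^b-1}{b^2},p^b\big)=2b$.
   Context: For a prime power $q$ and a positive integer $k$, the Waring number $g(k,q)$ is the smallest $s$ (if it exists) such that every element of $\mathbb{F}_q$ is a sum of $s$ $k$-th powers of elements of $\mathbb{F}_q$. *)

From HB Require Import structures.
From mathcomp Require Import all_boot all_order all_algebra all_field.
Set Implicit Arguments. Unset Strict Implicit. Unset Printing Implicit Defensive.
Import GRing.Theory.
Local Open Scope ring_scope.

Definition sum_of_powers (F : finFieldType) (k s : nat) (x : F) : Prop :=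
  exists f : 'I_s -> F, x = \sum_(i < s) f i ^+ k.

Definition waring_ok (F : finFieldType) (k s : nat) : Prop :=
  forall x : F, sum_of_powers k s x.

(* [waring_number F k s] : s is the Waring number g(k, |F|), i.e. the smallest
   s such that every element of F is a sum of s k-th powers. *)
Definition waring_number (F : finFieldType) (k s : nat) : Prop :=
  waring_ok F k s /\ (forall s', waring_ok F k s' -> (s <= s')%N).

(* Let q = p^b and k = (q - 1)/b^2.  As p = bt + 1 with b not dividing t, we
   have p^j = 1 + jtb (mod b^2); hence b^2 divides q - 1, and a primitive
   b^2-th root of unity z in F_q has b distinct Frobenius conjugates z^(p^j),
   j < b, so that 1, z, ..., z^(b-1) is a basis of F_q over F_p.  The nonzero
   k-th powers of F_q are the b^2-th roots of unity, i.e. the products u z^i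
   with i < b and u a b-th root of unity, and the b-th roots of unity are the
   nonzero t-th powers of F_p.  So, in this basis, a sum of s k-th powers is a
   vector whose coordinates are sums of t-th powers of F_p using s summands in
   total: b g(t,p) summands always suffice, and the vector all of whose
   coordinates need g(t,p) summands needs b g(t,p) of them.  For p = 2b + 1 we
   have t = 2, and g(2,p) = 2 as in every finite field of odd order. *)

From HB Require Import structures.
From mathcomp Require Import all_boot all_order all_algebra all_field.
From mathcomp Require Import cyclic.
From mathcomp Require Import ring.
From Stdlib Require Import Classical.

Set Implicit Arguments. Unset Strict Implicit. Unset Printing Implicit Defensive.
Import GRing.Theory.
Local Open Scope ring_scope.

Section SumsOfPowers.
Variables (F : finFieldType) (k : nat).

Lemma sum_of_powers0 : sum_of_powers k 0 (0 : F).
Proof. by exists (fun=> 0); rewrite big_ord0. Qed.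

Lemma sum_of_powers1 (x : F) : sum_of_powers k 1 (x ^+ k).
Proof. by exists (fun=> x); rewrite big_ord1. Qed.

Lemma sum_of_powersD m n (x y : F) :
  sum_of_powers k m x -> sum_of_powers k n y -> sum_of_powers k (m + n) (x + y).
Proof.
move=> [f ->] [g ->].
exists (fun i => match split i with inl j => f j | inr j => g j end).
by rewrite big_split_ord /=; congr (_ + _); apply: eq_bigr => i _;
  rewrite (unsplitK (inl _ _), unsplitK (inr _ _)).
Qed.

Lemma sum_of_powers_widen m n (x : F) : (0 < k)%N -> (m <= n)%N ->
  sum_of_powers k m x -> sum_of_powers k n x.
Proof.
move=> k_gt0 le_mn x_m; rewrite -(subnKC le_mn) -[x]addr0.
apply: sum_of_powersD x_m _; exists (fun=> 0).
by rewrite big1 // => i _; rewrite expr0n gtn_eqF.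
Qed.

Lemma sum_of_powers_big (I : finType) (P : pred I) (a : I -> F) :
  (forall i, exists y, a i = y ^+ k) ->
  sum_of_powers k #|P| (\sum_(i | P i) a i).
Proof.
move=> a_pow; have [f a_def] := fin_all_exists a_pow.
rewrite -big_enum cardE; elim: (enum P) => [|i s IHs].
  by rewrite big_nil; exact: sum_of_powers0.
by rewrite big_cons /= -add1n a_def; apply: sum_of_powersD (sum_of_powers1 _) IHs.
Qed.

Lemma sum_of_powers_sum m n (a : 'I_n -> F) :
  (forall i, sum_of_powers k m (a i)) -> sum_of_powers k (n * m) (\sum_(i < n) a i).
Proof.
elim: n a => [|n IHn] a a_m; first by rewrite big_ord0; exact: sum_of_powers0.
by rewrite big_ord_recr mulSnr; apply: sum_of_powersD => //; apply: IHn.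
Qed.

Lemma waring_number_witness g : (0 < k)%N -> waring_number F k g ->
  exists x : F, forall s, sum_of_powers k s x -> (g <= s)%N.
Proof.
move=> k_gt0 [_ g_min]; case: g g_min => [|g] g_min; first by exists 0.
have [x x_hard] : exists x : F, ~ sum_of_powers k g x.
  by apply: not_all_ex_not => g_ok; have := g_min g g_ok; rewrite ltnn.
exists x => s x_s; rewrite ltnNge; apply/negP => le_sg.
exact/x_hard/(sum_of_powers_widen k_gt0 le_sg).
Qed.

End SumsOfPowers.

Section FinFieldUnityRoots.
Variable F : finFieldType.

Lemma finField_card_pred_gt0 : (0 < #|F|.-1)%N.
Proof. by rewrite -subn1 subn_gt0 finNzRing_gt1. Qed.

Lemma expf_card_pred (x : F) : x != 0 -> x ^+ #|F|.-1 = 1.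
Proof.
move=> x_neq0; apply: (mulIf x_neq0).
by rewrite mul1r -exprSr prednK ?expf_card // ltnW ?finNzRing_gt1.
Qed.

Lemma finField_prim_root : exists w : F, (#|F|.-1).-primitive_root w.
Proof.
set units := enum [pred x : F | x != 0].
have size_units : size units = #|F|.-1 by rewrite -cardE -(cardC1 0); apply: eq_card.
have /hasP[w _ w_prim] : has (#|F|.-1).-primitive_root units.
  apply: has_prim_root finField_card_pred_gt0 _ (enum_uniq _) _; rewrite ?size_units //.
  by apply/allP => x; rewrite mem_enum => x_neq0; apply/unity_rootP/expf_card_pred.
by exists w.
Qed.

Lemma finField_prim_root_dvd n : (n %| #|F|.-1)%N -> exists z : F, n.-primitive_root z.
Proof.
move=> n_dvd; have [w w_prim] := finField_prim_root.
by exists (w ^+ (#|F|.-1 %/ n)); apply: dvdn_prim_root.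
Qed.

Variables (k n : nat).
Hypothesis kn_card : (k * n)%N = #|F|.-1.

Lemma expr_unity_root (x : F) : x != 0 -> (x ^+ k) ^+ n = 1.
Proof. by move=> x_neq0; rewrite -exprM kn_card expf_card_pred. Qed.

Lemma unity_root_expr (y : F) : y ^+ n = 1 -> exists x, y = x ^+ k.
Proof.
have [w w_prim] := finField_prim_root; rewrite -kn_card in w_prim.
have n_gt0 : (0 < n)%N by move: finField_card_pred_gt0; rewrite -kn_card muln_gt0 => /andP[].
have := dvdn_prim_root w_prim (dvdn_mull k (dvdnn n)); rewrite mulnK // => wk_prim.
by case/(prim_rootP wk_prim) => i ->; exists (w ^+ i); rewrite exprAC.
Qed.

End FinFieldUnityRoots.

Section PrimeFieldEmbedding.
Variables (F : fieldType) (p : nat).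
Hypothesis pcharF : p \in [pchar F].

(* The characteristic hypothesis is an argument so that the ring morphism
   instance below can be found by unification. *)
Definition Fp_embed of p \in [pchar F] := fun a : 'F_p => (a : nat)%:R : F.
Local Notation emb := (Fp_embed pcharF).

Lemma Fp_embed_nat n : emb n%:R = n%:R.
Proof.
rewrite /Fp_embed val_Fp_nat ?(pcharf_prime pcharF) //.
by rewrite [in RHS](divn_eq n p) natrD mulrnA (mulrn_pchar pcharF) add0r.
Qed.

Lemma Fp_embed_is_nmod_morphism : nmod_morphism emb.
Proof.
split=> [|a b]; first by rewrite -[0]/(0%:R : 'F_p) Fp_embed_nat.
by rewrite -[a]natr_Zp -[b]natr_Zp -natrD !Fp_embed_nat natrD.
Qed.

Lemma Fp_embed_is_monoid_morphism : monoid_morphism emb.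
Proof.
split=> [|a b]; first by rewrite -[1]/(1%:R : 'F_p) Fp_embed_nat.
by rewrite -[a]natr_Zp -[b]natr_Zp -natrM !Fp_embed_nat natrM.
Qed.

HB.instance Definition _ := GRing.isNmodMorphism.Build 'F_p F emb
  Fp_embed_is_nmod_morphism.
HB.instance Definition _ := GRing.isMonoidMorphism.Build 'F_p F emb
  Fp_embed_is_monoid_morphism.

Lemma Fp_embed_inj : injective emb.
Proof. exact: fmorph_inj. Qed.

Lemma Fp_embed_frobenius a : emb a ^+ p = emb a.
Proof. by rewrite -(pFrobenius_autE pcharF) pFrobenius_aut_nat. Qed.

End PrimeFieldEmbedding.

Lemma frobenius_conj_free (F : fieldType) p n (z : F) (c : 'I_n -> F) :
    p \in [pchar F] -> {in gtn n &, injective (fun j => z ^+ (p ^ j))} ->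
    (forall i, c i ^+ p = c i) -> \sum_(i < n) c i * z ^+ i = 0 ->
  forall i, c i = 0.
Proof.
move=> pcharF conj_inj c_frob sum_eq0.
pose Q := \sum_(i < n) c i *: 'X^i.
have Q_frob : map_poly (pFrobenius_aut pcharF) Q = Q.
  rewrite rmorph_sum; apply: eq_bigr => i _ /=.
  by rewrite map_polyZ map_polyXn /= pFrobenius_autE c_frob.
have Q_root j : Q.[z ^+ (p ^ j)] = 0.
  elim: j => [|j IHj].
    rewrite expn0 expr1 -{}sum_eq0 horner_sum; apply: eq_bigr => i _.
    by rewrite hornerZ hornerXn.
  by rewrite expnSr exprM -pFrobenius_autE -{1}Q_frob horner_map IHj rmorph0.
have size_Q : (size Q <= n)%N.
  apply: leq_trans (size_sum _ _ _) _; apply/bigmax_leqP => i _.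
  by apply: leq_trans (size_scale_leq _ _) _; rewrite size_polyXn.
have Q_eq0 : Q = 0.
  apply: contraTeq size_Q => Q_neq0; rewrite -ltnNge.
  have := max_poly_roots Q_neq0 (rs := [seq z ^+ (p ^ j) | j <- iota 0 n]).
  rewrite size_map size_iota; apply; first by apply/allP => _ /mapP[j _ ->]; apply/eqP.
  by rewrite map_inj_in_uniq ?iota_uniq // => i j; rewrite !mem_iota; apply: conj_inj.
move=> i; have : Q`_i = 0 by rewrite Q_eq0 coef0.
by rewrite coef_sumMXn (big_pred1 i).
Qed.

Section PowersModSquare.
Variables b t : nat.
Local Open Scope nat_scope.

Lemma expn_mulSn_mod m : (b * t).+1 ^ m = 1 + m * t * b %[mod b ^ 2].
Proof.
elim: m => [|m IHm]; first by rewrite expn0 !mul0n.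
rewrite expnSr -modnMml IHm modnMml.
have -> : (1 + m * t * b) * (b * t).+1 = m * t * t * b ^ 2 + (1 + m.+1 * t * b) by ring.
by rewrite modnMDl.
Qed.

Lemma sqr_dvdn_expn_pred : b ^ 2 %| ((b * t).+1 ^ b).-1.
Proof.
rewrite -subn1 -eqn_mod_dvd ?expn_gt0 // expn_mulSn_mod.
by rewrite mulnAC mulnn addnC mulnC modnMDl.
Qed.

Lemma expn_mulSn_mod_inj i j : prime b -> ~~ (b %| t) -> i < b -> j < b ->
  (b * t).+1 ^ i = (b * t).+1 ^ j %[mod b ^ 2] -> i = j.
Proof.
move=> b_prime b_ndvd_t; wlog le_ij : i j / i <= j.
  move=> wlog_ij lt_ib lt_jb eq_ij; have [le_ij|/ltnW le_ji] := leqP i j.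
    exact: wlog_ij.
  exact/esym/wlog_ij.
move=> _ lt_jb; rewrite !expn_mulSn_mod => /eqP; rewrite eqn_modDl eq_sym.
rewrite eqn_mod_dvd; last by rewrite !leq_mul2r le_ij !orbT.
rewrite -!mulnBl -mulnn dvdn_pmul2r ?prime_gt0 // Euclid_dvdM // (negbTE b_ndvd_t) orbF.
rewrite /dvdn modn_small; last exact: leq_ltn_trans (leq_subr i j) lt_jb.
by rewrite subn_eq0 => le_ji; apply/eqP; rewrite eqn_leq le_ij.
Qed.

End PowersModSquare.

Section WaringSubfield.
Variables (b p t : nat) (F : finFieldType).
Hypotheses (b_prime : prime b) (p_prime : prime p) (t_gt0 : (0 < t)%N)
  (p_def : p = (b * t).+1) (b_ndvd_t : ~~ (b %| t)%N) (card_F : #|F| = (p ^ b)%N).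

Local Notation k := ((p ^ b).-1 %/ b ^ 2)%N.
Let pcharF : p \in [pchar F] := card_finPcharP card_F p_prime.
Local Notation emb := (Fp_embed pcharF).
Let b_gt0 : (0 < b)%N := prime_gt0 b_prime.

Let card_Fp_pred : (t * b)%N = #|'F_p|.-1.
Proof. by rewrite card_Fp // p_def mulnC. Qed.

Let k_mul_sqr : (k * b ^ 2)%N = #|F|.-1.
Proof. by rewrite card_F divnK // p_def sqr_dvdn_expn_pred. Qed.

Let k_gt0 : (0 < k)%N.
Proof. by move: (finField_card_pred_gt0 F); rewrite -k_mul_sqr muln_gt0 => /andP[]. Qed.

Let z_exists : exists z : F, (b ^ 2).-primitive_root z.
Proof. by apply: finField_prim_root_dvd; rewrite -k_mul_sqr dvdn_mull. Qed.
Let z := xchoose z_exists.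
Let z_prim : (b ^ 2).-primitive_root z := xchooseP z_exists.

Lemma unity_root_Fp_embed (y : F) : y ^+ b = 1 -> exists e : 'F_p, y = emb e ^+ t.
Proof.
have [u u_prim] : exists u : 'F_p, b.-primitive_root u.
  by apply: finField_prim_root_dvd; rewrite -card_Fp_pred dvdn_mull.
have emb_u_prim : b.-primitive_root (emb u) by rewrite fmorph_primitive_root.
case/(prim_rootP emb_u_prim) => i ->; rewrite -rmorphXn.
have [e ->] : exists e, u ^+ i = e ^+ t.
  by apply: (unity_root_expr card_Fp_pred); rewrite exprAC (prim_expr_order u_prim) expr1n.
by exists e; rewrite rmorphXn.
Qed.

Lemma kth_powerP (y : F) :
  (exists x, y = x ^+ k) <-> exists (i : 'I_b) (e : 'F_p), y = emb e ^+ t * z ^+ i.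
Proof.
split=> [[x ->]|[i [e ->]]].
  have [->|x_neq0] := eqVneq x 0.
    exists (Ordinal b_gt0), 0.
    by rewrite rmorph0 !expr0n (gtn_eqF k_gt0) (gtn_eqF t_gt0) /= mul0r.
  have [m ->] := prim_rootP z_prim (expr_unity_root k_mul_sqr x_neq0).
  have [e zb_e] : exists e, (z ^+ b) ^+ (m %/ b) = emb e ^+ t.
    apply: unity_root_Fp_embed.
    by rewrite exprAC -[(z ^+ b) ^+ b]exprM mulnn (prim_expr_order z_prim) expr1n.
  exists (Ordinal (ltn_pmod m b_gt0)), e.
  by rewrite -zb_e -exprM mulnC -exprD /= -divn_eq.
have [->|e_neq0] := eqVneq e 0.
  by exists 0; rewrite rmorph0 !expr0n (gtn_eqF k_gt0) (gtn_eqF t_gt0) /= mul0r.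
apply: (unity_root_expr k_mul_sqr).
rewrite exprMn [(z ^+ i) ^+ _]exprAC (prim_expr_order z_prim) expr1n mulr1.
rewrite -exprM -rmorphXn -mulnn mulnA exprM card_Fp_pred expf_card_pred //.
by rewrite expr1n rmorph1.
Qed.

Definition basis_comb (c : {ffun 'I_b -> 'F_p}) : F := \sum_(i < b) emb (c i) * z ^+ i.

Lemma basis_comb_inj : injective basis_comb.
Proof.
move=> c1 c2 eq_c12; apply/ffunP => i; apply: (@Fp_embed_inj _ _ pcharF); apply/eqP.
rewrite -subr_eq0; apply/eqP; move: i; apply: (frobenius_conj_free (z := z) pcharF).
- move=> i j lt_ib lt_jb /eqP; rewrite (eq_prim_root_expr z_prim) p_def => /eqP.
  exact: expn_mulSn_mod_inj.
- by move=> i; rewrite -!rmorphB Fp_embed_frobenius.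
- rewrite -[RHS](subrr (basis_comb c2)) -{1}eq_c12 -sumrB.
  by apply: eq_bigr => i _; rewrite mulrBl.
Qed.

Lemma basis_comb_surj (x : F) : exists c, x = basis_comb c.
Proof.
have card_coords : (#|F| <= #|{ffun 'I_b -> 'F_p}|)%N.
  by rewrite card_ffun card_Fp // card_ord card_F.
by have /codomP[c ->] := inj_card_onto basis_comb_inj card_coords x; exists c.
Qed.

Lemma waring_ok_lift g : waring_ok 'F_p t g -> waring_ok F k (b * g).
Proof.
move=> g_ok x; have [c ->] := basis_comb_surj x.
apply: sum_of_powers_sum => i; have [f ->] := g_ok (c i).
rewrite rmorph_sum mulr_suml -[g in sum_of_powers _ g]card_ord.
apply: sum_of_powers_big => j.
by apply/kth_powerP; exists i, (f j); rewrite rmorphXn.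
Qed.

Lemma sum_of_powers_coords c s : sum_of_powers k s (basis_comb c) ->
  exists ns : 'I_b -> nat,
    (\sum_(i < b) ns i)%N = s /\ forall i, sum_of_powers t (ns i) (c i).
Proof.
move=> [f eq_c].
have f_dec j : exists (i : 'I_b) (e : 'F_p), f j ^+ k = emb e ^+ t * z ^+ i.
  by apply/kth_powerP; exists (f j).
have [I /fin_all_exists[E IE]] := fin_all_exists f_dec.
pose c' := [ffun i => \sum_(j | I j == i) E j ^+ t].
have -> : c = c'.
  apply: basis_comb_inj; rewrite eq_c (eq_bigr _ (fun j _ => IE j)).
  rewrite (partition_big I predT) //=; apply: eq_bigr => i _.
  rewrite ffunE rmorph_sum mulr_suml; apply: eq_big => // j /eqP <-.
  by rewrite rmorphXn.
exists (fun i => #|[pred j | I j == i]|); split.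
  rewrite -[s in RHS]card_ord -sum1_card (partition_big I predT) //=.
  by apply: eq_bigr => i _; rewrite sum1_card.
by move=> i; rewrite ffunE; apply: sum_of_powers_big => j; exists (E j).
Qed.

Lemma waring_number_lift g : waring_number 'F_p t g -> waring_number F k (b * g).
Proof.
move=> g_waring; split; first exact: waring_ok_lift (proj1 g_waring).
move=> s s_ok; have [c0 c0_hard] := waring_number_witness t_gt0 g_waring.
have [ns [<- ns_ok]] := sum_of_powers_coords (s_ok (basis_comb [ffun=> c0])).
rewrite -[b in (b * g)%N]card_ord -sum_nat_const; apply: leq_sum => i _.
by apply: c0_hard; have := ns_ok i; rewrite ffunE.
Qed.

End WaringSubfield.

Section Squares.
Variable F : finFieldType.
Hypothesis F_odd : odd #|F|.

Let m := #|F|./2.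
Let card_F : #|F| = (2 * m).+1.
Proof. by rewrite -[in LHS](odd_double_half #|F|) F_odd mul2n. Qed.
Let card_F_pred : #|F|.-1 = (2 * m)%N.
Proof. by rewrite card_F. Qed.
Let m_gt0 : (0 < m)%N.
Proof. by move: (finField_card_pred_gt0 F); rewrite card_F_pred muln_gt0. Qed.

Let w_exists : exists w : F, (2 * m).-primitive_root w.
Proof. by rewrite -card_F_pred; apply: finField_prim_root. Qed.
Let w := xchoose w_exists.
Let w_prim : (2 * m).-primitive_root w := xchooseP w_exists.
Let w_neq0 : w != 0.
Proof. by rewrite (prim_root_eq0 w_prim) muln_eq0 /= -lt0n m_gt0. Qed.

Lemma finField_card_lt_sqr : (#|F| < 2 * #|[set x ^+ 2 | x : F]|)%N.
Proof.
have card_even_sqr : #|[set (w ^+ i) ^+ 2 | i : 'I_m]| = m.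
  rewrite card_imset ?card_ord // => i j /eqP.
  rewrite -!exprM (eq_prim_root_expr w_prim) ![(_ * 2)%N]mulnC -!muln_modr.
  by rewrite eqn_pmul2l // !modn_small // => /eqP /val_inj.
have zero_notin : 0 \notin [set (w ^+ i) ^+ 2 | i : 'I_m].
  by apply/negP => /imsetP[i _ /esym/eqP]; rewrite !expf_eq0 (negbTE w_neq0) andbF.
have : 0 |: [set (w ^+ i) ^+ 2 | i : 'I_m] \subset [set x ^+ 2 | x : F].
  apply/subsetP => _ /setU1P[->|/imsetP[i _ ->]]; apply/imsetP; last by exists (w ^+ i).
  by exists 0; rewrite ?expr0n.
move/subset_leq_card; rewrite cardsU1 zero_notin card_even_sqr => le_mS.
by rewrite card_F; apply: leq_trans (leq_mul (leqnn 2) le_mS); rewrite mulnDr muln1.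
Qed.

Lemma finField_exists_nonsqr : exists a : F, forall x, a != x ^+ 2.
Proof.
exists w => x; apply/eqP => w_sqr; have x_neq0 : x != 0.
  by apply: contraNneq w_neq0 => x0; rewrite w_sqr x0 expr0n.
have x_unity : x ^+ (2 * m) = 1 by rewrite -card_F_pred expf_card_pred.
have [i x_def] := prim_rootP w_prim x_unity.
move: w_sqr; rewrite x_def -exprM -{1}(expr1 w) => /eqP; rewrite (eq_prim_root_expr w_prim).
rewrite [(i * 2)%N]mulnC -muln_modr modn_small; last exact: leq_pmulr.
by move/eqP/(congr1 odd); rewrite oddM.
Qed.

Lemma waring_number_sqr : waring_number F 2 2.
Proof.
split=> [a | [|[|s]] s_ok //].
- pose S := [set x ^+ 2 | x : F]; pose T := [set a - y | y in S].
  have card_T : #|T| = #|S| by apply: card_imset; apply: subrI.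
  have /card_gt0P[_ /setIP[/imsetP[x1 _ ->] /imsetP[_ /imsetP[x2 _ ->] x12]]] :
      (0 < #|S :&: T|)%N.
    rewrite -(leq_add2l #|S :|: T|) cardsUI card_T addn1 addnn -mul2n.
    exact: leq_ltn_trans (max_card _) finField_card_lt_sqr.
  rewrite -(subrK (x2 ^+ 2) a) -x12.
  exact: sum_of_powersD (sum_of_powers1 2 x1) (sum_of_powers1 2 x2).
- by have [f] := s_ok 1; rewrite big_ord0 => /eqP; rewrite oner_eq0.
- have [a a_nonsqr] := finField_exists_nonsqr; have [f] := s_ok a.
  by rewrite big_ord1 => /eqP; rewrite (negbTE (a_nonsqr _)).
Qed.

End Squares.

Lemma classic_ex_minn (P : nat -> Prop) n :
  P n -> exists m, P m /\ forall m', P m' -> (m <= m')%N.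
Proof.
elim/ltn_ind: n => n IHn Pn.
have [[m [lt_mn Pm]]|no_less] := classic (exists m, (m < n)%N /\ P m).
  exact: IHn Pm.
exists n; split=> // m Pm; rewrite leqNgt; apply/negP => lt_mn.
by apply: no_less; exists m.
Qed.

Lemma waring_ok_Fp p k : prime p -> (0 < k)%N -> waring_ok 'F_p k p.
Proof.
move=> p_prime k_gt0 a.
have lt_ap : (a < p)%N by rewrite -[p in (_ < p)%N](Fp_cast p_prime) ltn_ord.
apply: (sum_of_powers_widen k_gt0 (ltnW lt_ap)); exists (fun=> 1).
by rewrite (eq_bigr _ (fun i _ => expr1n _ k)) sumr_const card_ord natr_Zp.
Qed.

Lemma waring_number_Fp_exists p k : prime p -> (0 < k)%N ->
  exists g, waring_number 'F_p k g.
Proof.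
by move=> p_prime k_gt0; have [g] := classic_ex_minn (waring_ok_Fp p_prime k_gt0); exists g.
Qed.

Local Close Scope ring_scope.

Theorem mainTheorem9 :
  (forall (b p t : nat), prime b -> prime p -> (0 < t)%N -> p = (b * t).+1 ->
     ~~ (b %| t)%N ->
     forall F : finFieldType, #|F| = (p ^ b)%N ->
     exists g1 : nat,
       waring_number 'F_p t g1 /\
       waring_number F ((p ^ b).-1 %/ (b ^ 2))%N (b * g1)%N)
  /\
  (forall b : nat, prime b -> odd b -> prime (2 * b).+1 ->
     forall F : finFieldType, #|F| = (((2 * b).+1) ^ b)%N ->
     waring_number F ((((2 * b).+1) ^ b).-1 %/ (b ^ 2))%N (2 * b)%N).
Proof.
split=> [b p t b_prime p_prime t_gt0 p_def b_ndvd_t F card_F|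
         b b_prime b_odd p_prime F card_F].
  have [g g_waring] := waring_number_Fp_exists p_prime t_gt0.
  exists g; split=> //.
  exact (waring_number_lift b_prime p_prime t_gt0 p_def b_ndvd_t card_F g_waring).
have b_ndvd_2 : ~~ (b %| 2) by rewrite dvdn_prime2 //; case: eqP b_odd => // ->.
have Fp_odd : odd #|'F_(2 * b).+1| by rewrite card_Fp // /= oddM.
rewrite [X in waring_number _ _ X]mulnC.
have p_def : (2 * b).+1 = (b * 2).+1 by rewrite mulnC.
exact (waring_number_lift (t := 2) b_prime p_prime isT p_def b_ndvd_2 card_F
  (waring_number_sqr Fp_odd)).
Qed.
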